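(* Let $f:\mathbb{R}^n\times\mathbb{R}^m\to\mathbb{R}^n$ be a polynomial map and let $\boldsymbol\psi:\mathbb{R}^n\to\mathbb{R}^m$ be a ReLU neural network $\boldsymbol\psi(x) = W_N\rho(W_{N-1}\cdots\rho(W_2\rho(W_1x+b_1)+b_2)\cdots+b_{N-1})+b_N$, where $\rho(z)=\max(z,0)$ is applied componentwise, modeled semialgebraically as follows: the lifting variable is $\lambda=(\lambda_1,\dots,\lambda_{N-1})$ (the outputs of the hidden layers), and the constraints $g(x,u,\lambda)\ge0$, $h(x,u,\lambda)=0$ consist of, with $z_1 = W_1x+b_1$ and $z_i = W_i\lambda_{i-1}+b_i$ for $2\le i\le N-1$: $\lambda_i\ge z_i$, $\lambda_i\ge 0$, $\lambda_i\odot(\lambda_i - z_i)=0$ for $i=1,\dots,N-1$ (componentwise, $\odot$ the componentwise product), and $u = W_N\lambda_{N-1}+b_N$. Then the function $x\mapsto \inf\{\|u\|_2+\|\lambda\|_2 \mid g(x,u,\lambda)\ge0,\ h(x,u,\lambda)=0\}$ is bounded on some neighborhood of the origin. Moreover, with \[ \mathbf{K} = \{(x,u,\lambda,x^+,u^+,\lambda^+) \mid x^+ = f(x,u),\ g(x,u,\lambda)\ge 0,\ h(x,u,\lambda)=0,\ g(x^+,u^+,\lambda^+)\ge 0,\ h(x^+,u^+,\lambda^+)=0\}, \] if a continuous function $V$ of $(x,u,\lambda)$ satisfies $V(x^+,u^+,\lambda^+) - V(x,u,\lambda)\le -\|x\|_2^2$ and $V(x,u,\lambda)\ge 0$ for all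 $(x,u,\lambda,x^+,u^+,\lambda^+)\in\mathbf{K}$, then the closed-loop system $x_{k+1}=f(x_k,\boldsymbol\psi(x_k))$ is globally asymptotically stable.
   Context: The closed-loop system is globally asymptotically stable if (i) for all initial conditions $x_0$, $\lim_{k\to\infty}x_k=0$, and (ii) for every $\epsilon>0$ there exists $\delta>0$ such that $\|x_0\|_2\le\delta$ implies $\|x_k\|_2\le\epsilon$ for all $k$. *)

From HB Require Import structures.
From mathcomp Require Import all_boot all_order all_algebra.
From mathcomp Require Import all_classical all_reals all_analysis.
From mathcomp Require mpoly.
Set Implicit Arguments. Unset Strict Implicit. Unset Printing Implicit Defensive.
Import Order.TTheory GRing.Theory Num.Theory.
Import numFieldNormedType.Exports.
Local Open Scope classical_set_scope.
Local Open Scope ring_scope.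

Section Defs.
Variable R : realType.

Definition l2 (k : nat) (v : 'cV[R]_k) : R := Num.sqrt (\sum_i (v i 0) ^+ 2).

Definition poly_map (n m : nat) (f : 'cV[R]_n -> 'cV[R]_m -> 'cV[R]_n) : Prop :=
  exists P : 'I_n -> mpoly.mpoly (n + m) R,
    forall x u i, f x u i 0 = mpoly.meval (fun k : 'I_(n + m) => col_mx x u k 0) (P i).

Definition relu (k : nat) (v : 'cV[R]_k) : 'cV[R]_k := \col_i Num.max (v i 0) 0.

(* Network architecture (paper's layers i = 1..N, here 0-indexed):
   there are H := N.-1 hidden layers; hidden layer j (j < H) has width w j;
   the input dimension of layer j is din j (n for j = 0, w (j-1) otherwise).
   Paper's W_{j+1}, b_{j+1} (j < H) are W j, b j; paper's W_N, b_N are WN, bN. *)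
Definition din (n : nat) (w : nat -> nat) (j : nat) : nat :=
  if j is k.+1 then w k else n.

Fixpoint fwd (n : nat) (w : nat -> nat)
   (W : forall j : nat, 'M[R]_(w j, din n w j)) (b : forall j : nat, 'cV[R]_(w j))
   (x : 'cV[R]_n) (j : nat) : 'cV[R]_(din n w j) :=
  match j return 'cV[R]_(din n w j) with
  | 0 => x
  | k.+1 => relu (W k *m fwd W b x k + b k)
  end.

Definition psi (n m N : nat) (w : nat -> nat)
   (W : forall j : nat, 'M[R]_(w j, din n w j)) (b : forall j : nat, 'cV[R]_(w j))
   (WN : 'M[R]_(m, din n w N.-1)) (bN : 'cV[R]_m) (x : 'cV[R]_n) : 'cV[R]_m :=
  WN *m fwd W b x N.-1 + bN.

Definition lift_t (N : nat) (w : nat -> nat) := forall j : 'I_N.-1, 'cV[R]_(w j).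

Definition lam_at (N : nat) (w : nat -> nat) (lam : lift_t N w) (k : nat) : 'cV[R]_(w k) :=
  match @idP (k < N.-1)%N with
  | ReflectT hk => lam (Ordinal hk)
  | ReflectF _ => 0
  end.

Definition layer_in (n N : nat) (w : nat -> nat) (x : 'cV[R]_n) (lam : lift_t N w)
   (j : nat) : 'cV[R]_(din n w j) :=
  match j return 'cV[R]_(din n w j) with
  | 0 => x
  | k.+1 => lam_at lam k
  end.

Definition l2lam (N : nat) (w : nat -> nat) (lam : lift_t N w) : R :=
  Num.sqrt (\sum_(j : 'I_N.-1) \sum_i (lam j i 0) ^+ 2).

Definition feasible (n m N : nat) (w : nat -> nat)
   (W : forall j : nat, 'M[R]_(w j, din n w j)) (b : forall j : nat, 'cV[R]_(w j))
   (WN : 'M[R]_(m, din n w N.-1)) (bN : 'cV[R]_m)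
   (x : 'cV[R]_n) (u : 'cV[R]_m) (lam : lift_t N w) : Prop :=
  (forall (j : 'I_N.-1) (r : 'I_(w j)),
     let z := W j *m layer_in x lam j + b j in
     z r 0 <= lam j r 0 /\ 0 <= lam j r 0 /\ lam j r 0 * (lam j r 0 - z r 0) = 0)
  /\ u = WN *m layer_in x lam N.-1 + bN.

Definition dist3 (n m N : nat) (w : nat -> nat)
   (x x' : 'cV[R]_n) (u u' : 'cV[R]_m) (lam lam' : lift_t N w) : R :=
  Num.sqrt (l2 (x - x') ^+ 2 + l2 (u - u') ^+ 2
            + \sum_(j : 'I_N.-1) \sum_i (lam j i 0 - lam' j i 0) ^+ 2).

Definition continuous3 (n m N : nat) (w : nat -> nat)
   (V : 'cV[R]_n -> 'cV[R]_m -> lift_t N w -> R) : Prop :=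
  forall x u lam (eps : R), 0 < eps -> exists2 delta : R, 0 < delta &
    forall x' u' lam', dist3 x x' u u' lam lam' < delta ->
      `|V x' u' lam' - V x u lam| < eps.

Definition traj (n : nat) (F : 'cV[R]_n -> 'cV[R]_n) (x0 : 'cV[R]_n) (k : nat) : 'cV[R]_n :=
  iter k F x0.

Definition GAS (n : nat) (F : 'cV[R]_n -> 'cV[R]_n) : Prop :=
  (forall x0, traj F x0 k @[k --> \oo] --> (0 : 'cV[R]_n))
  /\ (forall eps : R, 0 < eps -> exists2 delta : R, 0 < delta &
        forall x0, l2 x0 <= delta -> forall k, l2 (traj F x0 k) <= eps).

End Defs.

From HB Require Import structures.
From mathcomp Require Import all_boot all_order all_algebra.
From mathcomp Require Import all_classical all_reals all_analysis.
From mathcomp Require mpoly.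
From mathcomp Require Import lra.
Import Order.TTheory GRing.Theory Num.Theory.
Import numFieldNormedType.Exports.
Local Open Scope classical_set_scope.
Local Open Scope ring_scope.

(* The network's own hidden-layer outputs lambda(x) = (fwd x 1, ..., fwd x (N-1)) give a
   feasible lift of (x, psi x), and lambda and psi are continuous in x.  Hence the optimal
   lifted cost is squeezed between 0 and the continuous function |psi x| + |lambda(x)|, which
   is bounded near 0.  Along the closed loop x_{k+1} = F x_k, the function
   v x := V (x, psi x, lambda(x)) is continuous, nonnegative and satisfies
   v (F x) - v x <= - |x|^2, so v(x_k) decreases to a limit and |x_k|^2 <= v x_k - v x_{k+1}
   tends to 0.  By continuity the limit is v 0, whence |x_k|^2 <= v x_0 - v 0, which is small
   when x_0 is: this is Lyapunov stability. *)

Section Norms.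
Context {R : realType}.

Lemma l2_ge0 {k} (v : 'cV[R]_k) : 0 <= l2 v.
Proof. exact: sqrtr_ge0. Qed.

Lemma normr_le_l2 {k} (v : 'cV[R]_k) : `|v| <= l2 v.
Proof.
rewrite [leLHS]/Num.Def.normr /= mx_normrE.
apply: bigmax_le => [|[i j] _]; first exact: l2_ge0.
rewrite /= (ord1 j) -sqrtr_sqr /l2 ler_sqrt; last by rewrite sumr_ge0 // => l _; exact: sqr_ge0.
by rewrite (bigD1 i) //= lerDl sumr_ge0 // => l _; exact: sqr_ge0.
Qed.

Lemma dist3_refl n m N w (x : 'cV[R]_n) (u : 'cV[R]_m) (lam : lift_t R N w) :
  dist3 x x u u lam lam = 0.
Proof.
have l2_0 k : l2 (0 : 'cV[R]_k) = 0.
  by rewrite /l2 big1 ?sqrtr0 // => i _; rewrite mxE expr0n.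
rewrite /dist3 !subrr !l2_0 big1 => [|j _]; first by rewrite expr0n !addr0 sqrtr0.
by rewrite big1 // => i _; rewrite subrr expr0n.
Qed.

End Norms.

Section EntrywiseContinuity.
Context {R : realType} {T : topologicalType}.

Lemma continuous_sum (I : Type) (r : seq I) (P : pred I) (g : I -> T -> R) :
  (forall i, continuous (g i)) -> continuous (fun t => \sum_(i <- r | P i) g i t).
Proof.
move=> gc; apply: continuous_big => [|i _]; [exact: (@add_continuous R^o) | exact: gc].
Qed.

Lemma continuous_sqr (g : T -> R) : continuous g -> continuous (fun t => g t ^+ 2).
Proof. by move=> gc t; exact: (continuous_comp (gc t) (@exprn_continuous R 2 (g t))). Qed.

Lemma continuous_l2 {k} {X : T -> 'cV[R]_k} :
  (forall i, continuous (fun t => X t i 0)) -> continuous (fun t => l2 (X t)).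
Proof.
move=> Xc t; rewrite /l2; apply: continuous_comp; last exact: sqrt_continuous.
by apply: continuous_sum => i; exact: continuous_sqr.
Qed.

Lemma continuous_l2lam {N w} {L : T -> lift_t R N w} :
  (forall j i, continuous (fun t => L t j i 0)) -> continuous (fun t => l2lam (L t)).
Proof.
move=> Lc t; rewrite /l2lam; apply: continuous_comp; last exact: sqrt_continuous.
by apply: continuous_sum => j; apply: continuous_sum => i; exact: continuous_sqr.
Qed.

Lemma continuous_affine_entry {p k} (M : 'M[R]_(p, k)) (c : 'cV[R]_p)
    (Y : T -> 'cV[R]_k) i :
  (forall l, continuous (fun t => Y t l 0)) -> continuous (fun t => (M *m Y t + c) i 0).
Proof.
move=> Yc t; under eq_fun do rewrite !mxE.
apply: cvgD; last exact: cvg_cst.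
by apply: continuous_sum => l {}t; apply: cvgM; [exact: cvg_cst | exact: Yc].
Qed.

Section Composition.
Context {n m N : nat} {w : nat -> nat}.
Context {X : T -> 'cV[R]_n} {U : T -> 'cV[R]_m} {L : T -> lift_t R N w}.
Hypotheses (X_cont : forall i, continuous (fun t => X t i 0))
  (U_cont : forall i, continuous (fun t => U t i 0))
  (L_cont : forall j i, continuous (fun t => L t j i 0)).

Lemma continuous_dist3 x u lam :
  continuous (fun t => dist3 x (X t) u (U t) lam (L t)).
Proof.
have entry_sub k (c : 'cV[R]_k) (Y : T -> 'cV[R]_k) i :
    (forall i, continuous (fun t => Y t i 0)) -> continuous (fun t => (c - Y t) i 0).
  move=> Yc t; under eq_fun do rewrite !mxE.
  by apply: cvgB; [exact: cvg_cst | exact: Yc].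
move=> t; rewrite /dist3; apply: continuous_comp; last exact: sqrt_continuous.
apply: cvgD; first apply: cvgD.
- by apply: continuous_sqr; apply: continuous_l2 => i; exact: entry_sub.
- by apply: continuous_sqr; apply: continuous_l2 => i; exact: entry_sub.
apply: continuous_sum => j; apply: continuous_sum => i; apply: continuous_sqr => {}t.
by apply: cvgB; [exact: cvg_cst | exact: L_cont].
Qed.

Lemma continuous3_comp {V : 'cV[R]_n -> 'cV[R]_m -> lift_t R N w -> R} :
  continuous3 V -> continuous (fun t => V (X t) (U t) (L t)).
Proof.
move=> V_cont t0; apply/cvgrPdist_lt => e e0.
have [d d0 Vd] := V_cont (X t0) (U t0) (L t0) e e0.
have /cvgr_dist_lt/(_ _ d0) := continuous_dist3 (X t0) (U t0) (L t0) t0.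
apply: filterS => t; rewrite dist3_refl sub0r normrN distrC => dist_lt.
by apply: Vd; rewrite -[X in X < _]ger0_norm ?sqrtr_ge0.
Qed.

End Composition.

End EntrywiseContinuity.

Section Lyapunov.
Context {R : realType} {n : nat}.
Variables (F : 'cV[R]_n -> 'cV[R]_n) (v : 'cV[R]_n -> R).
Hypotheses (v_ge0 : forall x, 0 <= v x)
  (v_decrease : forall x, v (F x) - v x <= - l2 x ^+ 2)
  (v_cont0 : {for 0, continuous v}).

Lemma l2_traj_sqr_le x0 k :
  l2 (traj F x0 k) ^+ 2 <= v (traj F x0 k) - v (traj F x0 k.+1).
Proof. by have := v_decrease (traj F x0 k); rewrite /traj iterS; lra. Qed.

Lemma lyapunov_traj_nonincreasing x0 : nonincreasing_seq (fun k => v (traj F x0 k)).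
Proof.
apply/nonincreasing_seqP => k; have := l2_traj_sqr_le x0 k.
by have := sqr_ge0 (l2 (traj F x0 k)); lra.
Qed.

Lemma lyapunov_traj_is_cvg x0 : cvgn (fun k => v (traj F x0 k)).
Proof.
apply: nonincreasing_is_cvgn; first exact: lyapunov_traj_nonincreasing.
by exists 0 => _ [k _ <-].
Qed.

Lemma traj_cvg0 x0 : traj F x0 k @[k --> \oo] --> (0 : 'cV[R]_n).
Proof.
apply/cvgr0Pnorm_lt => e e0.
have /cvgr_dist_lt/(_ _ (exprn_gt0 2 e0)) := lyapunov_traj_is_cvg x0.
apply: filterS => k; rewrite ltr_distlC => /andP[_ vk_lt].
have lim_le := nonincreasing_cvgn_ge (lyapunov_traj_nonincreasing x0)
  (lyapunov_traj_is_cvg x0) k.+1.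
rewrite (le_lt_trans (normr_le_l2 (traj F x0 k))) // -ltr_sqr ?nnegrE ?l2_ge0 ?ltW //.
by have := l2_traj_sqr_le x0 k; lra.
Qed.

Lemma lyapunov_value0_le x0 k : v 0 <= v (traj F x0 k).
Proof.
have -> : v 0 = limn (fun k => v (traj F x0 k)).
  by apply/esym/(cvg_lim (@Rhausdorff R)); exact: (cvg_comp _ _ (traj_cvg0 x0) v_cont0).
exact: nonincreasing_cvgn_ge (lyapunov_traj_nonincreasing x0) (lyapunov_traj_is_cvg x0) k.
Qed.

Lemma l2_traj_sqr_le_gap x0 k : l2 (traj F x0 k) ^+ 2 <= v x0 - v 0.
Proof.
have := @lyapunov_traj_nonincreasing x0 0 k (leq0n k).
by have := lyapunov_value0_le x0 k.+1; have := l2_traj_sqr_le x0 k; lra.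
Qed.

Lemma lyapunov_GAS : GAS F.
Proof.
split=> [|eps eps0]; first exact: traj_cvg0.
have /cvgr_dist_lt/(_ _ (exprn_gt0 2 eps0))/nbhs_norm0P[d /= d0 v_near0] := v_cont0.
exists (d / 2) => [|x0 x0_le k]; first by rewrite divr_gt0.
have /v_near0 : `|x0| < d by have := normr_le_l2 x0; lra.
rewrite ltr_distlC => /andP[_ v_lt].
rewrite -ler_sqr ?nnegrE ?l2_ge0 ?ltW //.
by have := l2_traj_sqr_le_gap x0 k; lra.
Qed.

End Lyapunov.

Lemma relu_complementarity (R : realDomainType) (z : R) :
  z <= Num.max z 0 /\ 0 <= Num.max z 0 /\ Num.max z 0 * (Num.max z 0 - z) = 0.
Proof.
by rewrite /Num.max; case: ltrP => [/ltW z_le0 | z_ge0]; rewrite ?lexx ?mul0r ?subrr ?mulr0.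
Qed.

Section Network.
Context {R : realType} {n m N : nat} {w : nat -> nat}.
Variables (W : forall j : nat, 'M[R]_(w j, din n w j)) (b : forall j : nat, 'cV[R]_(w j))
  (WN : 'M[R]_(m, din n w N.-1)) (bN : 'cV[R]_m).

Definition hidden_outputs (x : 'cV[R]_n) : lift_t R N w := fun j => fwd W b x j.+1.

Lemma lam_atE (lam : lift_t R N w) {k} (hk : (k < N.-1)%N) :
  lam_at lam k = lam (Ordinal hk).
Proof.
rewrite /lam_at; destruct idP as [hk' | not_hk]; last by case: not_hk.
by rewrite (bool_irrelevance hk' hk).
Qed.

Lemma layer_in_hidden_outputs x j :
  (j <= N.-1)%N -> layer_in x (hidden_outputs x) j = fwd W b x j.
Proof. by case: j => [//|k] hk /=; rewrite (lam_atE _ hk). Qed.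

Lemma feasible_hidden_outputs x :
  feasible W b WN bN x (psi W b WN bN x) (hidden_outputs x).
Proof.
split=> [j r /= | ]; last by rewrite /psi layer_in_hidden_outputs.
rewrite layer_in_hidden_outputs ?mxE; last exact: ltnW.
exact: relu_complementarity.
Qed.

Lemma continuous_fwd j i : continuous (fun x => fwd W b x j i 0).
Proof.
elim: j i => [|k IH] i /=; first exact: coord_continuous.
move=> x; under eq_fun do rewrite mxE.
apply: continuous_max; last exact: cst_continuous.
exact: (continuous_affine_entry (W k) (b k) _ i IH x).
Qed.

Lemma continuous_psi i : continuous (fun x => psi W b WN bN x i 0).
Proof. exact: (continuous_affine_entry WN bN _ i (continuous_fwd _)). Qed.

Lemma continuous_hidden_outputs j i : continuous (fun x => hidden_outputs x j i 0).
Proof. exact: (continuous_fwd j.+1 i). Qed.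

Definition feasible_costs x := [set r : R | exists u lam,
  feasible W b WN bN x u lam /\ r = l2 u + l2lam lam].

Lemma inf_feasible_costs_bounds x :
  0 <= inf (feasible_costs x) <= l2 (psi W b WN bN x) + l2lam (hidden_outputs x).
Proof.
set cost := l2 (psi W b WN bN x) + l2lam (hidden_outputs x).
have cost_ge0 : lbound (feasible_costs x) 0.
  by move=> _ [u [lam [_ ->]]]; rewrite addr_ge0 ?l2_ge0 ?sqrtr_ge0.
have net_cost : feasible_costs x cost.
  by exists (psi W b WN bN x), (hidden_outputs x); split; first exact: feasible_hidden_outputs.
by rewrite lb_le_inf ?ge_inf //; [exists 0 | exists cost].
Qed.

Lemma continuous_net_cost :
  continuous (fun x => l2 (psi W b WN bN x) + l2lam (hidden_outputs x)).
Proof.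
move=> x; exact: (cvgD (continuous_l2 continuous_psi x)
                       (continuous_l2lam continuous_hidden_outputs x)).
Qed.

Lemma inf_feasible_costs_bounded_near0 :
  exists M : R, \forall x \near (0 : 'cV[R]_n), `|inf (feasible_costs x)| <= M.
Proof.
exists (l2 (psi W b WN bN 0) + l2lam (hidden_outputs 0) + 1).
have /cvgr_dist_lt/(_ _ ltr01) := continuous_net_cost 0.
apply: filterS => x; rewrite ltr_distlC => /andP[_ cost_lt].
have /andP[inf_ge0 inf_le] := inf_feasible_costs_bounds x.
by rewrite ger0_norm // (le_trans inf_le) ?ltW.
Qed.

End Network.

Theorem corollary1 (R : realType) (n m N : nat) (hN : (1 < N)%N)
    (f : 'cV[R]_n -> 'cV[R]_m -> 'cV[R]_n) (hf : poly_map f)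
    (w : nat -> nat)
    (W : forall j : nat, 'M[R]_(w j, din n w j)) (b : forall j : nat, 'cV[R]_(w j))
    (WN : 'M[R]_(m, din n w N.-1)) (bN : 'cV[R]_m) :
  (exists M : R, \forall x \near (0 : 'cV[R]_n),
      `| inf [set r : R | exists (u : 'cV[R]_m) (lam : lift_t R N w),
                 feasible W b WN bN x u lam /\ r = l2 u + l2lam lam] | <= M)
  /\
  (forall V : 'cV[R]_n -> 'cV[R]_m -> lift_t R N w -> R,
     continuous3 V ->
     (forall x u lam xp up lamp,
        xp = f x u ->
        feasible W b WN bN x u lam ->
        feasible W b WN bN xp up lamp ->
        V xp up lamp - V x u lam <= - (l2 x) ^+ 2 /\ 0 <= V x u lam) ->
     GAS (fun x => f x (@psi R n m N w W b WN bN x))).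
Proof.
split=> [|V V_cont V_lyap]; first exact: inf_feasible_costs_bounded_near0.
pose v x := V x (psi W b WN bN x) (hidden_outputs W b x).
have v_lyap x : v (f x (psi W b WN bN x)) - v x <= - l2 x ^+ 2 /\ 0 <= v x.
  by apply: V_lyap; [|exact: feasible_hidden_outputs..].
apply: (@lyapunov_GAS _ _ _ v) => [x | x | ]; [exact: (v_lyap x).2 | exact: (v_lyap x).1 |].
have coord_cont i := @coord_continuous R n 1 i 0.
exact: (continuous3_comp coord_cont (continuous_psi W b WN bN)
          (continuous_hidden_outputs W b) V_cont 0 : {for 0, continuous v}).
Qed.
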